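(* Let $A_1$ and $A_2$ be simple and covering atoms that are unifiable with a most general unifier $\sigma$, and suppose $A_1$ contains a compound term. Let $G$ be a flat literal and $\mathcal G$ a set of flat literals such that $\mathrm{Var}(A_1)=\mathrm{Var}(G)=\mathrm{Var}(\mathcal G)$. Then $G\sigma$ and every literal of $\mathcal G\sigma$ are flat, and $\mathrm{Var}(A_1\sigma)=\mathrm{Var}(G\sigma)=\mathrm{Var}(\mathcal G\sigma)$.
   Context: A compound term is a term that is neither a variable nor a constant. $\mathrm{Var}(E)$ denotes the set of variables of $E$. A literal is flat if each argument is a variable or a constant; it is simple if each argument is a variable, a constant, or a term $f(u_1,\dots,u_n)$ with each $u_i$ a variable or a constant. A literal is covering if every compound term $t$ occurring in it satisfies $\mathrm{Var}(t)$ equal to the set of variables of the literal (flat literals are trivially covering). *)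

From Stdlib Require Import List.
Import ListNotations.
Set Implicit Arguments.

Inductive term : Type :=
| Var : nat -> term
| Const : nat -> term
| Fn : nat -> list term -> term.

Record atom : Type := mkAtom { apred : nat; aargs : list term }.

(* A literal: polarity (true = positive) and an atom. *)
Record literal : Type := mkLit { lsign : bool; latom : atom }.

Fixpoint term_vars (t : term) : list nat :=
  match t with
  | Var x => [x]
  | Const _ => []
  | Fn _ ts =>
      (fix go (l : list term) : list nat :=
         match l with [] => [] | u :: l' => term_vars u ++ go l' end) ts
  end.

Fixpoint subterms (t : term) : list term :=
  t :: match t with
       | Fn _ ts =>
           (fix go (l : list term) : list term :=
              match l with [] => [] | u :: l' => subterms u ++ go l' end) ts
       | _ => []
       end.

Definition atom_vars (A : atom) : list nat := flat_map term_vars (aargs A).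
Definition lit_vars (L : literal) : list nat := atom_vars (latom L).

Definition is_compound (t : term) : Prop :=
  match t with Fn _ _ => True | _ => False end.

Definition is_var_or_const (t : term) : Prop :=
  match t with Var _ | Const _ => True | Fn _ _ => False end.

Definition occurs_in_atom (s : term) (A : atom) : Prop :=
  exists t, In t (aargs A) /\ In s (subterms t).

Definition flat_atom (A : atom) : Prop :=
  forall t, In t (aargs A) -> is_var_or_const t.

Definition simple_atom (A : atom) : Prop :=
  forall t, In t (aargs A) ->
    is_var_or_const t \/
    exists f us, t = Fn f us /\ forall u, In u us -> is_var_or_const u.

Definition same_vars (l1 l2 : list nat) : Prop :=
  forall x, In x l1 <-> In x l2.

Definition covering_atom (A : atom) : Prop :=
  forall t, occurs_in_atom t A -> is_compound t -> same_vars (term_vars t) (atom_vars A).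

Definition contains_compound (A : atom) : Prop :=
  exists t, occurs_in_atom t A /\ is_compound t.

Definition flat_lit (L : literal) : Prop := flat_atom (latom L).

Definition subst := nat -> term.

Fixpoint tsubst (s : subst) (t : term) : term :=
  match t with
  | Var x => s x
  | Const c => Const c
  | Fn f ts => Fn f (map (tsubst s) ts)
  end.

Definition asubst (s : subst) (A : atom) : atom :=
  mkAtom (apred A) (map (tsubst s) (aargs A)).

Definition lsubst (s : subst) (L : literal) : literal :=
  mkLit (lsign L) (asubst s (latom L)).

Definition unifier (s : subst) (A1 A2 : atom) : Prop := asubst s A1 = asubst s A2.

Definition mgu (s : subst) (A1 A2 : atom) : Prop :=
  unifier s A1 A2 /\
  forall th, unifier th A1 A2 -> exists eta, forall x, th x = tsubst eta (s x).

Definition litset := literal -> Prop.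

Definition set_vars (S : litset) (x : nat) : Prop :=
  exists L, S L /\ In x (lit_vars L).

Definition set_subst (s : subst) (S : litset) : litset :=
  fun L' => exists L, S L /\ L' = lsubst s L.

(* It suffices that [sigma] maps every variable of [A1] to a variable or a
   constant: flat literals stay flat, and since [A1], [G] and [GG] have the same
   variables, so do their images.  Let [m] be the largest size of [sigma x] for
   [x] a variable of [A1].  Because [A1] and [A2] are simple and covering, every
   compound subterm of [A1] or [A2] has a [sigma]-image of size greater than [m].
   Hence replacing, in the images of [sigma], every compound subterm of size at
   most [m] by a variable gives another unifier.  As no substitution turns a
   compound term into a variable, this unifier factors through [sigma] only if no
   [sigma x] (all of size at most [m]) is compound. *)

From Stdlib Require Import List Arith Lia.
Import ListNotations.

Fixpoint term_ind' (P : term -> Prop) (HVar : forall x, P (Var x))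
  (HConst : forall c, P (Const c)) (HFn : forall f ts, Forall P ts -> P (Fn f ts))
  (t : term) : P t :=
  match t with
  | Var x => HVar x
  | Const c => HConst c
  | Fn f ts =>
      HFn f ts ((fix go (l : list term) : Forall P l :=
                   match l with
                   | [] => Forall_nil P
                   | u :: l' => Forall_cons u (term_ind' P HVar HConst HFn u) (go l')
                   end) ts)
  end.

Lemma term_vars_Fn f ts : term_vars (Fn f ts) = flat_map term_vars ts.
Proof. induction ts as [|u ts IH]; [reflexivity|]. simpl in *. now rewrite IH. Qed.

Lemma subterms_Fn f ts : subterms (Fn f ts) = Fn f ts :: flat_map subterms ts.
Proof.
  induction ts as [|u ts IH]; [reflexivity|]. simpl in *. congruence.
Qed.

Lemma in_term_vars_tsubst s t x :
  In x (term_vars (tsubst s t)) <-> exists z, In z (term_vars t) /\ In x (term_vars (s z)).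
Proof.
  induction t as [y|c|f ts IH] using term_ind'.
  - simpl. split; [intros Hx; exists y; simpl; auto|]. now intros [z [[<-|[]] Hx]].
  - simpl. split; [intros []|]. now intros [z [[] _]].
  - cbn [tsubst]. rewrite !term_vars_Fn, flat_map_concat_map, map_map, <- flat_map_concat_map.
    rewrite Forall_forall in IH. split.
    + intros Hx. apply in_flat_map in Hx as [u [Hu Hx]].
      apply IH in Hx as [z [Hz Hxz]]; [|assumption].
      exists z. split; [apply in_flat_map; eauto|assumption].
    + intros [z [Hz Hxz]]. apply in_flat_map in Hz as [u [Hu Hzu]].
      apply in_flat_map. exists u. split; [assumption|]. apply IH; eauto.
Qed.

Lemma in_atom_vars_asubst s A x :
  In x (atom_vars (asubst s A)) <-> exists z, In z (atom_vars A) /\ In x (term_vars (s z)).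
Proof.
  unfold atom_vars, asubst; simpl. rewrite flat_map_concat_map, map_map, <- flat_map_concat_map.
  split.
  - intros Hx. apply in_flat_map in Hx as [t [Ht Hx]].
    apply in_term_vars_tsubst in Hx as [z [Hz Hxz]].
    exists z. split; [apply in_flat_map; eauto|assumption].
  - intros [z [Hz Hxz]]. apply in_flat_map in Hz as [t [Ht Hzt]].
    apply in_flat_map. exists t. split; [assumption|]. apply in_term_vars_tsubst; eauto.
Qed.

Lemma in_set_vars_set_subst s GG x :
  set_vars (set_subst s GG) x <-> exists z, set_vars GG z /\ In x (term_vars (s z)).
Proof.
  unfold set_vars, set_subst, lit_vars. split.
  - intros [L' [[L [HL ->]] Hx]]. apply in_atom_vars_asubst in Hx as [z [Hz Hxz]].
    exists z. split; [exists L|]; auto.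
  - intros [z [[L [HL Hz]] Hxz]]. exists (lsubst s L). split; [exists L; auto|].
    apply in_atom_vars_asubst; eauto.
Qed.

Lemma flat_lit_lsubst s L :
  flat_lit L -> (forall z, In z (lit_vars L) -> is_var_or_const (s z)) ->
  flat_lit (lsubst s L).
Proof.
  intros HL Hs t Ht. apply in_map_iff in Ht as [u [<- Hu]].
  specialize (HL u Hu). destruct u as [z|c|]; simpl in *; [|exact I|contradiction].
  apply Hs. unfold lit_vars, atom_vars. apply in_flat_map. exists (Var z). simpl; auto.
Qed.

Fixpoint tsize (t : term) : nat :=
  match t with
  | Var _ | Const _ => 0
  | Fn _ ts =>
      S ((fix go (l : list term) : nat :=
            match l with [] => 0 | u :: l' => tsize u + go l' end) ts)
  end.

Lemma tsize_Fn f ts : tsize (Fn f ts) = S (list_sum (map tsize ts)).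
Proof. induction ts as [|u ts IH]; [reflexivity|]. simpl in *. injection IH as IH. now rewrite IH. Qed.

Lemma tsize_lt_Fn f ts u : In u ts -> tsize u < tsize (Fn f ts).
Proof.
  rewrite tsize_Fn. intros Hu. apply Nat.lt_succ_r.
  induction ts as [|v ts IH]; simpl in *; [contradiction|].
  destruct Hu as [<-|Hu]; [lia|]. specialize (IH Hu). lia.
Qed.

Lemma tsize_tsubst_ge s t x : In x (term_vars t) -> tsize (s x) <= tsize (tsubst s t).
Proof.
  induction t as [y|c|f ts IH] using term_ind'.
  - now intros [<-|[]].
  - intros [].
  - cbn [tsubst]. rewrite term_vars_Fn. intros Hx. apply in_flat_map in Hx as [u [Hu Hx]].
    rewrite Forall_forall in IH. specialize (IH u Hu Hx).
    pose proof (tsize_lt_Fn f _ _ (in_map (tsubst s) ts u Hu)). lia.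
Qed.

Lemma tsize_tsubst_Fn_gt s f ts x :
  In x (term_vars (Fn f ts)) -> tsize (s x) < tsize (tsubst s (Fn f ts)).
Proof.
  rewrite term_vars_Fn. intros Hx. apply in_flat_map in Hx as [u [Hu Hx]].
  pose proof (tsize_tsubst_ge s u x Hx).
  pose proof (tsize_lt_Fn f _ _ (in_map (tsubst s) ts u Hu)). cbn [tsubst]. lia.
Qed.

Fixpoint collapse (m : nat) (t : term) : term :=
  match t with
  | Var y => Var y
  | Const c => Const c
  | Fn f ts =>
      if tsize (Fn f ts) <=? m then Var 0
      else Fn f ((fix go (l : list term) : list term :=
                    match l with [] => [] | u :: l' => collapse m u :: go l' end) ts)
  end.

Lemma collapse_Fn m f ts :
  collapse m (Fn f ts) = if tsize (Fn f ts) <=? m then Var 0 else Fn f (map (collapse m) ts).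
Proof.
  cbn [collapse]. now destruct (tsize (Fn f ts) <=? m).
Qed.

Lemma collapse_tsubst m s t :
  (forall u, In u (subterms t) -> is_compound u -> m < tsize (tsubst s u)) ->
  collapse m (tsubst s t) = tsubst (fun z => collapse m (s z)) t.
Proof.
  induction t as [y|c|f ts IH] using term_ind'; intros Hbig; [reflexivity|reflexivity|].
  cbn [tsubst]. rewrite collapse_Fn.
  assert (Hf : m < tsize (tsubst s (Fn f ts))).
  { apply Hbig; [rewrite subterms_Fn; now left|exact I]. }
  cbn [tsubst] in Hf. destruct (Nat.leb_spec (tsize (Fn f (map (tsubst s) ts))) m); [lia|].
  f_equal. rewrite map_map. apply map_ext_in. intros u Hu.
  rewrite Forall_forall in IH. apply IH; [assumption|]. intros v Hv.
  apply Hbig. rewrite subterms_Fn. right. apply in_flat_map; eauto.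
Qed.

Lemma asubst_collapse m s A :
  (forall u, occurs_in_atom u A -> is_compound u -> m < tsize (tsubst s u)) ->
  asubst (fun z => collapse m (s z)) A = mkAtom (apred A) (map (collapse m) (aargs (asubst s A))).
Proof.
  intros Hbig. unfold asubst; simpl. f_equal. rewrite map_map.
  apply map_ext_in. intros t Ht. symmetry. apply collapse_tsubst.
  intros u Hu. apply Hbig. now exists t.
Qed.

Lemma unifier_collapse m s A1 A2 :
  unifier s A1 A2 ->
  (forall u, occurs_in_atom u A1 -> is_compound u -> m < tsize (tsubst s u)) ->
  (forall u, occurs_in_atom u A2 -> is_compound u -> m < tsize (tsubst s u)) ->
  unifier (fun z => collapse m (s z)) A1 A2.
Proof.
  intros Hs Hbig1 Hbig2. unfold unifier.
  rewrite (asubst_collapse m s A1 Hbig1), (asubst_collapse m s A2 Hbig2), Hs.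
  injection Hs as Hpred _. now rewrite Hpred.
Qed.

Lemma mgu_collapse_var_or_const m s A1 A2 x :
  mgu s A1 A2 -> unifier (fun z => collapse m (s z)) A1 A2 ->
  tsize (s x) <= m -> is_var_or_const (s x).
Proof.
  intros [_ Hgen] Hcol Hsmall. destruct (Hgen _ Hcol) as [eta Heta]. specialize (Heta x).
  destruct (s x) as [y|c|f ts]; [exact I|exact I|].
  rewrite collapse_Fn in Heta. destruct (Nat.leb_spec (tsize (Fn f ts)) m); [discriminate|lia].
Qed.

Lemma simple_compound_occurrence A u :
  simple_atom A -> occurs_in_atom u A -> is_compound u ->
  In u (aargs A) /\ exists f us, u = Fn f us /\ forall v, In v us -> is_var_or_const v.
Proof.
  intros HA [t [Ht Hu]] Hc. destruct (HA t Ht) as [Hvc|[f [us [-> Hus]]]].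
  - destruct t; try contradiction; destruct Hu as [<-|[]]; contradiction.
  - rewrite subterms_Fn in Hu. destruct Hu as [<-|Hu]; [split; eauto|].
    apply in_flat_map in Hu as [v [Hv Hu]].
    destruct v; try (destruct (Hus _ Hv)); destruct Hu as [<-|[]]; contradiction.
Qed.

Lemma covering_tsize_lt s A u x :
  covering_atom A -> occurs_in_atom u A -> is_compound u -> In x (atom_vars A) ->
  tsize (s x) < tsize (tsubst s u).
Proof.
  intros HA Hu Hc Hx. destruct u as [| |f ts]; try contradiction.
  apply tsize_tsubst_Fn_gt. now apply (HA _ Hu Hc).
Qed.

Lemma in_map_eq_image {X Y} (g : X -> Y) l1 l2 a :
  map g l1 = map g l2 -> In a l1 -> exists b, In b l2 /\ g a = g b.
Proof.
  revert l2. induction l1 as [|a1 l1 IH]; intros [|b1 l2] Hmap Ha;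
    try discriminate; [destruct Ha|].
  injection Hmap as Hab Hmap. destruct Ha as [<-|Ha].
  - exists b1. simpl; auto.
  - destruct (IH _ Hmap Ha) as [b [Hb Hgb]]. exists b. simpl; auto.
Qed.

(* Compare a compound argument of [A1] with the argument of [A2] at the same
   position: the latter is either a variable whose image contains [s x], or a
   compound term one of whose flat arguments has image [s x]. *)
Lemma unified_var_image_bound s A1 A2 x :
  simple_atom A1 -> covering_atom A1 -> simple_atom A2 ->
  unifier s A1 A2 -> contains_compound A1 -> In x (atom_vars A1) ->
  tsize (s x) = 0 \/ exists z, In z (atom_vars A2) /\ tsize (s x) <= tsize (s z).
Proof.
  intros HS1 HC1 HS2 Hs [u [Hu Hc]] Hx.
  destruct (simple_compound_occurrence _ _ HS1 Hu Hc) as [Hu1 [f [us [-> Hus]]]].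
  assert (Hxu : In x (term_vars (Fn f us))) by now apply (HC1 _ Hu Hc).
  injection Hs as _ Hargs.
  destruct (in_map_eq_image _ _ _ _ Hargs Hu1) as [t [Ht Hst]].
  destruct t as [y|c|g ws]; cbn [tsubst] in Hst; [|discriminate|].
  - right. exists y. split.
    + apply in_flat_map. exists (Var y). simpl; auto.
    + rewrite <- Hst. exact (tsize_tsubst_ge s (Fn f us) x Hxu).
  - injection Hst as _ Hmap.
    assert (Hxus : In (Var x) us).
    { rewrite term_vars_Fn in Hxu. apply in_flat_map in Hxu as [v [Hv Hxv]].
      destruct v as [y|c|]; [|destruct Hxv|destruct (Hus _ Hv)]. now destruct Hxv as [<-|[]]. }
    destruct (in_map_eq_image _ _ _ _ Hmap Hxus) as [v [Hv Hsv]]. cbn [tsubst] in Hsv.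
    destruct (simple_compound_occurrence A2 (Fn g ws) HS2) as [_ [g' [ws' [Hgw Hws]]]];
      [now exists (Fn g ws); split; [|left]|exact I|].
    injection Hgw as <- <-. destruct v as [z|c|]; [|left; now rewrite Hsv|destruct (Hws _ Hv)].
    right. exists z. split; [|now rewrite Hsv].
    apply in_flat_map. exists (Fn g ws). split; [assumption|].
    rewrite term_vars_Fn. apply in_flat_map. exists (Var z). simpl; auto.
Qed.

Lemma le_list_max_map {X} (g : X -> nat) l x : In x l -> g x <= list_max (map g l).
Proof.
  intros Hx. assert (Hle : list_max (map g l) <= list_max (map g l)) by lia.
  apply list_max_le in Hle. rewrite Forall_forall in Hle. now apply Hle, in_map.
Qed.

Lemma list_max_map_lt {X} (g : X -> nat) l k :
  0 < k -> (forall x, In x l -> g x < k) -> list_max (map g l) < k.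
Proof.
  intros Hk Hl. enough (list_max (map g l) <= pred k) by lia.
  apply list_max_le, Forall_forall. intros n Hn.
  apply in_map_iff in Hn as [x [<- Hx]]. specialize (Hl x Hx). lia.
Qed.

Lemma tsize_tsubst_compound_pos s u : is_compound u -> 0 < tsize (tsubst s u).
Proof. destruct u as [| |f ts]; try contradiction. intros _. cbn [tsubst]. rewrite tsize_Fn. lia. Qed.

Lemma mgu_simple_covering_var_or_const s A1 A2 x :
  simple_atom A1 -> covering_atom A1 -> simple_atom A2 -> covering_atom A2 ->
  mgu s A1 A2 -> contains_compound A1 -> In x (atom_vars A1) -> is_var_or_const (s x).
Proof.
  intros HS1 HC1 HS2 HC2 Hmgu HA1 Hx.
  set (m := list_max (map (fun z => tsize (s z)) (atom_vars A1))).
  assert (Hbig1 : forall u, occurs_in_atom u A1 -> is_compound u -> m < tsize (tsubst s u)).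
  { intros u Hu Hc. apply list_max_map_lt; [now apply tsize_tsubst_compound_pos|].
    intros z Hz. now apply covering_tsize_lt with A1. }
  assert (Hbig2 : forall u, occurs_in_atom u A2 -> is_compound u -> m < tsize (tsubst s u)).
  { intros u Hu Hc. pose proof (tsize_tsubst_compound_pos s u Hc).
    apply list_max_map_lt; [assumption|]. intros z Hz.
    destruct (unified_var_image_bound s A1 A2 z) as [Hz0|[y [Hy Hzy]]];
      try solve [assumption|apply Hmgu]; [lia|].
    pose proof (covering_tsize_lt s A2 u y HC2 Hu Hc Hy). lia. }
  apply (mgu_collapse_var_or_const m s A1 A2 x Hmgu).
  - apply unifier_collapse; [apply Hmgu|assumption|assumption].
  - now apply (le_list_max_map (fun z => tsize (s z))).
Qed.

Theorem mainTheorem5 (A1 A2 : atom) (sigma : subst) (G : literal) (GG : litset) :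
  simple_atom A1 -> covering_atom A1 ->
  simple_atom A2 -> covering_atom A2 ->
  mgu sigma A1 A2 ->
  contains_compound A1 ->
  flat_lit G ->
  (forall L, GG L -> flat_lit L) ->
  (forall x, In x (atom_vars A1) <-> In x (lit_vars G)) ->
  (forall x, In x (atom_vars A1) <-> set_vars GG x) ->
  flat_lit (lsubst sigma G) /\
  (forall L, set_subst sigma GG L -> flat_lit L) /\
  (forall x, In x (atom_vars (asubst sigma A1)) <-> In x (lit_vars (lsubst sigma G))) /\
  (forall x, In x (atom_vars (asubst sigma A1)) <-> set_vars (set_subst sigma GG) x).
Proof.
  intros HS1 HC1 HS2 HC2 Hmgu HA1 HG HGG HvarsG HvarsGG.
  pose proof (mgu_simple_covering_var_or_const sigma A1 A2) as Hflat.
  split; [|split; [|split]].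
  - apply flat_lit_lsubst; [assumption|]. intros z Hz. apply Hflat, HvarsG; assumption.
  - intros L' [L [HL ->]]. apply flat_lit_lsubst; [now apply HGG|].
    intros z Hz. apply Hflat, HvarsGG; try assumption. now exists L.
  - intros x. unfold lit_vars. cbn [lsubst latom].
    rewrite !in_atom_vars_asubst. now setoid_rewrite HvarsG.
  - intros x. rewrite in_atom_vars_asubst, in_set_vars_set_subst.
    now setoid_rewrite HvarsGG.
Qed.
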